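(* Let $Z$ be a topological space and let $f\colon Z\to\mathbb{R}$ be a function (not assumed continuous). Define \[ \Gamma_f^{<}=\{(z,\alpha)\in Z\times\mathbb{R} \mid f(z)<\alpha\}, \] equipped with the subspace topology from $Z\times\mathbb{R}$. If there exists a continuous function $g\colon Z\to\mathbb{R}$ with $f(z)\le g(z)$ for all $z\in Z$, then $\Gamma_f^{<}$ is homotopy equivalent to $Z$. *)

From HB Require Import structures.
From mathcomp Require Import all_boot all_order all_algebra.
From mathcomp Require Import all_classical all_reals all_analysis.
Set Implicit Arguments. Unset Strict Implicit. Unset Printing Implicit Defensive.
Import Order.TTheory GRing.Theory Num.Theory.
Import numFieldNormedType.Exports.
Local Open Scope classical_set_scope.
Local Open Scope ring_scope.

Definition homotopic (R : realType) {X Y : topologicalType} (p q : X -> Y) : Prop :=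
  exists H : X * set_type (`[0, 1] : set R) -> Y,
    continuous H /\
    (forall x (t : set_type (`[0, 1] : set R)), set_val t = 0 -> H (x, t) = p x) /\
    (forall x (t : set_type (`[0, 1] : set R)), set_val t = 1 -> H (x, t) = q x).

Definition homotopy_equivalent (R : realType) (X Y : topologicalType) : Prop :=
  exists (p : X -> Y) (q : Y -> X),
    continuous p /\ continuous q /\
    homotopic R (q \o p) idfun /\ homotopic R (p \o q) idfun.

Definition Gamma_lt (R : realType) (Z : topologicalType) (f : Z -> R) : set (Z * R) :=
  [set za | f za.1 < za.2].

(* Pick a continuous s > f (e.g. s = g + 1). The projection (z, a) |-> z and the
   section z |-> (z, s z) are continuous, the projection is a left inverse of the
   section, and the other composite is homotopic to the identity by sliding each
   point (z, a) vertically to (z, s z): the fibre {a | f z < a} is an interval,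
   so the straight-line homotopy stays inside the strict epigraph. *)
From HB Require Import structures.
From mathcomp Require Import all_boot all_order all_algebra.
From mathcomp Require Import lra.
From mathcomp Require Import all_classical all_reals all_analysis.
Import Order.TTheory GRing.Theory Num.Theory.
Import numFieldNormedType.Exports.
Local Open Scope classical_set_scope.
Local Open Scope ring_scope.

Lemma continuous_pair {T U V : topologicalType} (a : T -> U) (b : T -> V) :
  continuous a -> continuous b -> continuous (fun x => (a x, b x)).
Proof. by move=> ca cb x; apply: cvg_pair; [exact: ca | exact: cb]. Qed.

Lemma continuous_comp_fun {S T U : topologicalType} (f : S -> T) (g : T -> U) :
  continuous f -> continuous g -> continuous (g \o f).
Proof. by move=> cf cg x; apply: continuous_comp; [exact: cf | exact: cg]. Qed.

Lemma continuous_fst {U V : topologicalType} : continuous (@fst U V).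
Proof. by move=> x; exact: cvg_fst. Qed.

Lemma continuous_snd {U V : topologicalType} : continuous (@snd U V).
Proof. by move=> x; exact: cvg_snd. Qed.

Lemma continuous_lerp {R : realType} {T : topologicalType} (t a b : T -> R) :
  continuous t -> continuous a -> continuous b ->
  continuous (fun x => (1 - t x) * a x + t x * b x).
Proof.
move=> ct ca cb x.
apply: (@continuousD _ R^o _ (fun x => (1 - t x) * a x) (fun x => t x * b x)).
- apply: (@continuousM _ _ (fun x => 1 - t x) a); last exact: ca.
  by apply: (@continuousB _ R^o _ (fun=> 1)); [exact: cvg_cst | exact: ct].
- by apply: (@continuousM _ _ t b); [exact: ct | exact: cb].
Qed.

Lemma lerp_gt {R : realFieldType} (c a b t : R) :
  0 <= t <= 1 -> c < a -> c < b -> c < (1 - t) * a + t * b.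
Proof.
case/andP=> t0 t1 ca cb.
have [t_lt1 | t_ge1] := ltrP t 1.
- have : 0 < (1 - t) * (a - c) by rewrite mulr_gt0 // subr_gt0.
  have : 0 <= t * (b - c) by rewrite mulr_ge0 // subr_ge0 ltW.
  lra.
- have -> : t = 1 by apply/eqP; rewrite eq_le t1 t_ge1.
  by rewrite subrr mul0r mul1r add0r.
Qed.

Lemma homotopic_refl (R : realType) {X Y : topologicalType} (p : X -> Y) :
  continuous p -> homotopic R p p.
Proof.
move=> cp; exists (p \o fst); split; last by split.
exact: continuous_comp_fun continuous_fst cp.
Qed.

Section StrictEpigraph.
Variables (R : realType) (Z : topologicalType) (f s : Z -> R).
Hypothesis s_cont : continuous s.
Hypothesis f_lt_s : forall z, f z < s z.

Let E := set_type (Gamma_lt f).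
Let I := set_type (`[0, 1] : set R).

Definition epi_proj (w : E) : Z := (set_val w).1.

Definition epi_section (z : Z) : E :=
  exist _ (z, s z) (mem_set (f_lt_s z : Gamma_lt f (z, s z))).

Definition epi_slide_val (p : E * I) : Z * R :=
  let t := set_val p.2 in
  (epi_proj p.1, (1 - t) * s (epi_proj p.1) + t * (set_val p.1).2).

Lemma epi_slide_in (p : E * I) : epi_slide_val p \in Gamma_lt f.
Proof.
case: p => [[[z a] wE] [t tI]]; apply/mem_set.
apply: lerp_gt; [by have := set_mem tI; rewrite /= in_itv | exact: f_lt_s | exact: set_mem wE].
Qed.

Definition epi_slide (p : E * I) : E := exist _ (epi_slide_val p) (epi_slide_in p).

Lemma continuous_epi_val : continuous (set_val : E -> Z * R).
Proof. exact: initial_continuous. Qed.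

Lemma continuous_interval_val : continuous (set_val : I -> R).
Proof. exact: initial_continuous. Qed.

Lemma continuous_epi_proj : continuous epi_proj.
Proof. exact: continuous_comp_fun continuous_epi_val continuous_fst. Qed.

Lemma continuous_epi_section : continuous epi_section.
Proof.
apply: continuous_comp_initial.
by apply: (@continuous_pair _ _ _ id s) => // z; exact: cvg_id.
Qed.

Lemma continuous_epi_slide : continuous epi_slide.
Proof.
apply: continuous_comp_initial.
have cw : continuous (fun p : E * I => set_val p.1).
  by move=> p; apply: continuous_comp; [exact: cvg_fst | exact: continuous_epi_val].
have cz : continuous (fun p : E * I => epi_proj p.1).
  by move=> p; apply: continuous_comp; [exact: cvg_fst | exact: continuous_epi_proj].
apply: continuous_pair; first exact: cz.
apply: continuous_lerp.
- exact: continuous_comp_fun continuous_snd continuous_interval_val.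
- exact: continuous_comp_fun cz s_cont.
- exact: continuous_comp_fun cw continuous_snd.
Qed.

Lemma epi_section_proj_homotopic : homotopic R (epi_section \o epi_proj) idfun.
Proof.
exists epi_slide; split; first exact: continuous_epi_slide.
split=> -[[z a] wE] [t tI]; rewrite set_valE /= => t_eq.
all: apply: val_inj; rewrite /= /epi_slide_val /epi_proj !set_valE /= t_eq.
- by rewrite subr0 mul1r mul0r addr0.
- by rewrite subrr mul0r mul1r add0r.
Qed.

Lemma strict_epigraph_homotopy_equivalent : homotopy_equivalent R E Z.
Proof.
exists epi_proj, epi_section.
split; first exact: continuous_epi_proj.
split; first exact: continuous_epi_section.
split; first exact: epi_section_proj_homotopic.
have -> : epi_proj \o epi_section = idfun by [].
by apply: homotopic_refl => z; exact: cvg_id.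
Qed.

End StrictEpigraph.

Theorem lemma3p1 (R : realType) (Z : topologicalType) (f : Z -> R) :
  (exists g : Z -> R, continuous g /\ (forall z, f z <= g z)) ->
  homotopy_equivalent R (set_type (Gamma_lt f)) Z.
Proof.
case=> g [g_cont f_le_g].
have s_cont : continuous (fun z => g z + 1).
  by move=> z; apply: (@continuousD _ R^o _ g (fun=> 1)); [exact: g_cont | exact: cvg_cst].
have f_lt_s z : f z < g z + 1 by have := f_le_g z; lra.
exact: strict_epigraph_homotopy_equivalent s_cont f_lt_s.
Qed.
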